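(* Let $\{(\mathbf{x}_i,y_i)\}_{i=1}^n\subset\mathbb{R}^d\times\mathbb{R}$ with $\|\mathbf{x}_i\|=1$ and $|y_i|=O(1)$, and suppose $\lambda_0:=\lambda_{\min}(\mathbf{H}^\infty)>0$, where $\mathbf{H}^\infty_{ij}=\mathbf{x}_i^\top\mathbf{x}_j\frac{\pi-\arccos(\mathbf{x}_i^\top\mathbf{x}_j)}{2\pi}$. Let $\mathbf{W}=(\mathbf{w}_1,\dots,\mathbf{w}_m)$ with $\mathbf{w}_r\in\mathbb{R}^d$, $a_r\in\{-1,+1\}$, $u_i=\frac{1}{\sqrt m}\sum_{r=1}^m a_r\sigma(\mathbf{w}_r^\top\mathbf{x}_i)$ with $\sigma(z)=\max(z,0)$, $\mathbf{u}=(u_1,\dots,u_n)^\top$, $\mathbf{y}=(y_1,\dots,y_n)^\top$, $L(\mathbf{W})=\frac12\|\mathbf{u}-\mathbf{y}\|^2$, and let $\mathbf{H}\in\mathbb{R}^{n\times n}$ be given by $\mathbf{H}_{ij}=\frac1m\sum_{r=1}^m\mathbf{x}_i^\top\mathbf{x}_j\mathbb{I}\{\mathbf{w}_r^\top\mathbf{x}_i\ge0,\mathbf{w}_r^\top\mathbf{x}_j\ge0\}$. If $\lambda_{\min}(\mathbf{H})\ge\lambda_0/2$, then $$\frac{\sqrt{\lambda_0}}{\sqrt{2m}}\|\mathbf{y}-\mathbf{u}\|\le\max_{r\in[m]}\left\|\frac{\partial L(\mathbf{W})}{\partial\mathbf{w}_r}\right\|\le\frac{\sqrt n}{\sqrt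 m}\|\mathbf{y}-\mathbf{u}\|.$$
   Context: The gradient uses the convention $\frac{\partial L(\mathbf{W})}{\partial\mathbf{w}_r}=\frac{1}{\sqrt m}\sum_{i=1}^n(u_i-y_i)a_r\mathbf{x}_i\mathbb{I}\{\mathbf{w}_r^\top\mathbf{x}_i\ge0\}$. $\|\cdot\|$ is the Euclidean norm and $\lambda_{\min}$ the smallest eigenvalue. *)

From HB Require Import structures.
From mathcomp Require Import all_boot all_order all_algebra.
From mathcomp Require Import reals trigo.
Set Implicit Arguments. Unset Strict Implicit. Unset Printing Implicit Defensive.
Import Order.TTheory GRing.Theory Num.Theory.
Local Open Scope ring_scope.

Section Defs.
Variable R : realType.

Definition dotv k (u v : 'rV[R]_k) : R := \sum_(i < k) u 0 i * v 0 i.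
Definition enorm k (v : 'rV[R]_k) : R := Num.sqrt (dotv v v).

Definition relu (z : R) : R := Num.max z 0.

Definition ind (b : bool) : R := b%:R.

Definition is_lambda_min n (A : 'M[R]_n) (l : R) : Prop :=
  eigenvalue A l /\ forall a, eigenvalue A a -> l <= a.

Definition Hinf n d (X : 'I_n -> 'rV[R]_d) : 'M[R]_n :=
  \matrix_(i, j) (dotv (X i) (X j) * (pi - acos (dotv (X i) (X j))) / (2 * pi)).

Definition outp n d m (X : 'I_n -> 'rV[R]_d) (W : 'I_m -> 'rV[R]_d)
    (a : 'I_m -> R) : 'rV[R]_n :=
  \row_i ((Num.sqrt (m%:R))^-1 * \sum_(r < m) a r * relu (dotv (W r) (X i))).

Definition Hmat n d m (X : 'I_n -> 'rV[R]_d) (W : 'I_m -> 'rV[R]_d) : 'M[R]_n :=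
  \matrix_(i, j) ((m%:R)^-1 * \sum_(r < m)
     dotv (X i) (X j) * ind ((0 <= dotv (W r) (X i)) && (0 <= dotv (W r) (X j)))).

(* gradient dL/dw_r = 1/sqrt m sum_i (u_i - y_i) a_r x_i I{w_r^T x_i >= 0} *)
Definition gradw n d m (X : 'I_n -> 'rV[R]_d) (y : 'rV[R]_n)
    (W : 'I_m -> 'rV[R]_d) (a : 'I_m -> R) (r : 'I_m) : 'rV[R]_d :=
  (Num.sqrt (m%:R))^-1 *: \sum_(i < n)
     (((outp X W a) 0 i - y 0 i) * a r * ind (0 <= dotv (W r) (X i))) *: X i.

End Defs.

From HB Require Import structures.
From mathcomp Require Import all_boot all_order all_algebra.
From mathcomp Require Import reals trigo complex.
From mathcomp Require Import ring lra.
Set Implicit Arguments. Unset Strict Implicit. Unset Printing Implicit Defensive.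
Import Order.TTheory GRing.Theory Num.Theory.
Local Open Scope ring_scope.

(* With e := u - y and c_ri := e_i a_r I{w_r.x_i >= 0}, the gradient is
   g_r = m^-1/2 sum_i c_ri x_i.  Since a_r^2 = 1 and the indicators are
   idempotent, sum_r |g_r|^2 = e H e^T, which the Rayleigh bound (spectral
   theorem for the symmetric matrix H, complexified) makes at least
   lambda_min(H) |e|^2 >= lambda0/2 |e|^2; and sum_r |g_r|^2 <= m max_r |g_r|^2.
   For the upper bound, |x_i.x_j| <= 1 gives
   |sum_i c_ri x_i|^2 <= sum_ij (c_ri^2 + c_rj^2)/2 = n sum_i c_ri^2 <= n |e|^2. *)

Section EuclideanRow.
Variable R : realType.
Implicit Types (k : nat).

Lemma dotvC k (u v : 'rV[R]_k) : dotv u v = dotv v u.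
Proof. by apply: eq_bigr => i _; rewrite mulrC. Qed.

Lemma dotv_mulmx_tr k (u v : 'rV[R]_k) : dotv u v = (u *m v^T) 0 0.
Proof. by rewrite mxE; apply: eq_bigr => i _; rewrite mxE. Qed.

Lemma dotvNN k (u : 'rV[R]_k) : dotv (- u) (- u) = dotv u u.
Proof. by apply: eq_bigr => i _; rewrite !mxE mulrNN. Qed.

Lemma dotvZZ k (c : R) (u : 'rV[R]_k) : dotv (c *: u) (c *: u) = c ^+ 2 * dotv u u.
Proof. by rewrite /dotv mulr_sumr; apply: eq_bigr => i _; rewrite !mxE; ring. Qed.

Lemma dotv_sum n k (b c : 'I_n -> R) (U V : 'I_n -> 'rV[R]_k) :
  dotv (\sum_i b i *: U i) (\sum_j c j *: V j) =
  \sum_i \sum_j b i * c j * dotv (U i) (V j).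
Proof.
rewrite /dotv; under eq_bigr do rewrite !summxE mulr_suml.
rewrite exchange_big /=; apply: eq_bigr => i _.
under eq_bigr do rewrite mulr_sumr.
rewrite exchange_big /=; apply: eq_bigr => j _.
by rewrite mulr_sumr; apply: eq_bigr => l _; rewrite !mxE; ring.
Qed.

Lemma dotvv k (u : 'rV[R]_k) : dotv u u = \sum_i u 0 i ^+ 2.
Proof. by apply: eq_bigr => i _; rewrite expr2. Qed.

Lemma dotv_ge0 k (u : 'rV[R]_k) : 0 <= dotv u u.
Proof. by rewrite dotvv; apply: sumr_ge0 => i _; rewrite sqr_ge0. Qed.

Lemma enorm_ge0 k (u : 'rV[R]_k) : 0 <= enorm u.
Proof. exact: sqrtr_ge0. Qed.

Lemma enorm_sqr k (u : 'rV[R]_k) : enorm u ^+ 2 = dotv u u.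
Proof. by rewrite sqr_sqrtr // dotv_ge0. Qed.

Lemma enormN k (u : 'rV[R]_k) : enorm (- u) = enorm u.
Proof. by rewrite /enorm dotvNN. Qed.

Lemma ler_normr_dotv k (u v : 'rV[R]_k) :
  2 * `|dotv u v| <= dotv u u + dotv v v.
Proof.
have le_signed (s : R) : s ^+ 2 = 1 ->
    2 * (s * dotv u v) <= dotv u u + dotv v v.
  move=> s2; rewrite /dotv !mulr_sumr -big_split /=; apply: ler_sum => i _.
  by have := sqr_ge0 (u 0 i - s * v 0 i); rewrite expr2 in s2; nra.
have [uv_ge0|uv_lt0] := lerP 0 (dotv u v).
  by rewrite ger0_norm // -[X in 2 * X]mul1r le_signed ?expr1n.
by rewrite ltr0_norm // -mulN1r le_signed // sqrrN expr1n.
Qed.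

Lemma dotv_sum_unit_le n k (c : 'I_n -> R) (U : 'I_n -> 'rV[R]_k) :
  (forall i, enorm (U i) = 1) ->
  dotv (\sum_i c i *: U i) (\sum_i c i *: U i) <= n%:R * \sum_i c i ^+ 2.
Proof.
move=> U_unit; have U_dot1 i : dotv (U i) (U i) = 1 by rewrite -enorm_sqr U_unit expr1n.
rewrite dotv_sum -(ler_pM2l (ltr0Sn R 1)).
have -> : 2 * (n%:R * \sum_i c i ^+ 2) =
    \sum_(i < n) \sum_(j < n) (c i ^+ 2 + c j ^+ 2).
  symmetry; under eq_bigr do rewrite big_split /=.
  rewrite big_split /= [X in _ + X]exchange_big /= -mulr2n.
  under eq_bigr do rewrite sumr_const card_ord.
  by rewrite !mulr_natl sumrMnl.
rewrite mulr_sumr; apply: ler_sum => i _; rewrite mulr_sumr; apply: ler_sum => j _.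
have := ler_normr_dotv (U i) (U j); rewrite !U_dot1.
move: (dotv _ _) => x le_x; have x_sqr_le1 : x ^+ 2 <= 1.
  by rewrite -real_normK ?num_real // exprn_ile1 ?normr_ge0 //; lra.
have : 0 <= c j ^+ 2 * (1 - x ^+ 2) by rewrite mulr_ge0 ?sqr_ge0 ?subr_ge0.
(* (c_i - c_j x)^2 + c_j^2 (1 - x^2) = c_i^2 + c_j^2 - 2 c_i c_j x *)
have := sqr_ge0 (c i - c j * x).
rewrite !expr2 in x_sqr_le1 *; nra.
Qed.
End EuclideanRow.

Lemma ind_andb (R : realType) (b c : bool) : ind R (b && c) = ind R b * ind R c.
Proof. by rewrite /ind -natrM mulnb. Qed.

Lemma quad_formE (R : comPzRingType) n (w : 'rV[R]_n) (A : 'M[R]_n) :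
  (w *m A *m w^T) 0 0 = \sum_i \sum_j w 0 i * A i j * w 0 j.
Proof.
rewrite mxE exchange_big /=; apply: eq_bigr => j _.
by rewrite !mxE mulr_suml.
Qed.

Lemma sum_sqr_le_bigmax (R : realDomainType) m (f : 'I_m -> R) :
  (forall r, 0 <= f r) ->
  \sum_r f r ^+ 2 <= m%:R * (\big[Num.max/0]_r f r) ^+ 2.
Proof.
move=> f_ge0; rewrite mulr_natl -[m in _ *+ m]card_ord -sumr_const.
apply: ler_sum => r _; rewrite ler_sqr ?nnegrE ?f_ge0 ?bigmax_ge_id //.
exact: le_bigmax.
Qed.

Section SpectralRayleigh.
Variable C : numClosedFieldType.
Local Open Scope sesquilinear_scope.

Lemma spectral_diag_eigenvalue n (A : 'M[C]_n) k :
  A \is normalmx -> eigenvalue A (spectral_diag A 0 k).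
Proof.
move=> /orthomx_spectralP eqA; set P := spectralmx A in eqA *.
apply/eigenvalueP; exists (row k P).
  rewrite -row_mul {1}eqA !mulmxA mulmxV ?spectral_unit // mul1mx.
  by rewrite row_mul row_diag_mx -scalemxAl -rowE.
apply/eqP => rowk0; have /unitarymxP/(congr1 (row k)) := spectral_unitarymx A.
rewrite row_mul rowk0 mul0mx => /rowP/(_ k); rewrite !mxE eqxx => /eqP.
by rewrite eq_sym oner_eq0.
Qed.

Lemma spectral_rayleigh n (A : 'M[C]_n) c (v : 'rV_n) :
  A \is normalmx -> (forall k, c <= spectral_diag A 0 k) ->
  c * (v *m v ^t*) 0 0 <= (v *m A *m v ^t*) 0 0.
Proof.
move=> /orthomx_spectralP eqA le_c; set P := spectralmx A in eqA.
have P_unitary : P \is unitarymx := spectral_unitarymx A.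
pose z := v *m P ^t*.
have zE : z ^t* = P *m v ^t* by rewrite /z trmx_mul map_mxM trmxCK.
have -> : v *m A *m v ^t* = z *m diag_mx (spectral_diag A) *m z ^t*.
  by rewrite {1}eqA invmx_unitary // zE /z !mulmxA.
have -> : v *m v ^t* = z *m z ^t* by rewrite zE /z !mulmxA mulmxKtV.
rewrite mul_mx_diag !mxE mulr_sumr; apply: ler_sum => k _; rewrite !mxE.
rewrite mulrAC mulrC; apply: ler_wpM2l; [exact: mul_conjC_ge0 | exact: le_c].
Qed.
End SpectralRayleigh.

Section RealRayleigh.
Variable R : realType.
Local Open Scope sesquilinear_scope.
Local Notation toC := (real_complex R).

Lemma conjC_real_complex (x : R) : (toC x)^* = toC x.
Proof. by apply/CrealP; rewrite realE -(rmorph0 toC) !lecR -realE num_real. Qed.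

Lemma trmxC_map_real_complex m n (A : 'M[R]_(m, n)) :
  (map_mx toC A)^t* = map_mx toC A^T.
Proof. by apply/matrixP => i j; rewrite !mxE conjC_real_complex. Qed.

Lemma sym_map_real_complex_herm n (H : 'M[R]_n) :
  H^T = H -> map_mx toC H \is hermsymmx.
Proof.
move=> H_sym; apply/is_hermitianmxP.
by rewrite expr0 scale1r trmxC_map_real_complex H_sym.
Qed.

Lemma lambda_min_le_spectral_diag n (H : 'M[R]_n) l k :
  H^T = H -> is_lambda_min H l ->
  toC l <= spectral_diag (map_mx toC H) 0 k.
Proof.
move=> /sym_map_real_complex_herm Hc_herm [_ l_min].
set z := spectral_diag _ 0 k.
have z_real : z \is Num.real.
  by apply: (mxOverP (hermitian_spectral_diag_real Hc_herm)).
have Re_z : toC (complex.Re z) = z by exact: RRe_real.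
rewrite -Re_z lecR; apply: l_min.
have := eigenvalue_map toC H (complex.Re z).
rewrite [X in eigenvalue _ X]Re_z => <-.
exact/spectral_diag_eigenvalue/hermitian_normalmx.
Qed.

Lemma lambda_min_rayleigh n (H : 'M[R]_n) l (w : 'rV[R]_n) :
  H^T = H -> is_lambda_min H l ->
  l * (w *m w^T) 0 0 <= (w *m H *m w^T) 0 0.
Proof.
move=> H_sym l_min.
have Hc_normal := hermitian_normalmx (sym_map_real_complex_herm H_sym).
have := spectral_rayleigh (map_mx toC w) Hc_normal
  (fun k => lambda_min_le_spectral_diag k H_sym l_min).
by rewrite !trmxC_map_real_complex -!map_mxM !mxE -rmorphM lecR.
Qed.
End RealRayleigh.

Section Gradient.
Variables (R : realType) (n d m : nat).
Variables (X : 'I_n -> 'rV[R]_d) (y : 'rV[R]_n) (W : 'I_m -> 'rV[R]_d) (a : 'I_m -> R).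
Hypothesis a_sign : forall r, a r = 1 \/ a r = -1.

Let res := outp X W a - y.
Let act r i := ind R (0 <= dotv (W r) (X i)).
Let gradc r i := res 0 i * a r * act r i.
Let G r := \sum_i gradc r i *: X i.

Lemma a_sqr r : a r ^+ 2 = 1.
Proof. by case: (a_sign r) => ->; rewrite ?sqrrN expr1n. Qed.

Lemma act_sqr r i : act r i ^+ 2 = act r i.
Proof. by rewrite /act /ind; case: (0 <= dotv _ _); rewrite ?expr1n ?expr0n. Qed.

Lemma gradc_sqr_le r i : gradc r i ^+ 2 <= res 0 i ^+ 2.
Proof.
rewrite /gradc !exprMn a_sqr mulr1 act_sqr /act /ind.
by case: (0 <= dotv _ _); rewrite ?mulr1 ?mulr0 ?sqr_ge0.
Qed.

Lemma enorm_gradw_sqr r : enorm (gradw X y W a r) ^+ 2 = m%:R^-1 * dotv (G r) (G r).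
Proof.
rewrite enorm_sqr /gradw dotvZZ exprVn sqr_sqrtr ?ler0n //.
by congr (_ * dotv _ _); apply: eq_bigr => i _; rewrite /gradc /res !mxE.
Qed.

Lemma Hmat_sym : (Hmat X W)^T = Hmat X W.
Proof.
apply/matrixP => i j; rewrite !mxE; congr (_ * _); apply: eq_bigr => r _.
by rewrite andbC dotvC.
Qed.

Lemma sum_enorm_gradw_sqr :
  \sum_r enorm (gradw X y W a r) ^+ 2 = (res *m Hmat X W *m res^T) 0 0.
Proof.
rewrite quad_formE.
transitivity (\sum_r \sum_i \sum_j
    m%:R^-1 * (gradc r i * gradc r j * dotv (X i) (X j))).
  apply: eq_bigr => r _; rewrite enorm_gradw_sqr dotv_sum mulr_sumr.
  by apply: eq_bigr => i _; rewrite mulr_sumr.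
rewrite exchange_big; apply: eq_bigr => i _; rewrite exchange_big; apply: eq_bigr => j _.
rewrite [Hmat X W i j]mxE !mulr_sumr mulr_suml; apply: eq_bigr => r _.
have -> : gradc r i * gradc r j = res 0 i * res 0 j * (act r i * act r j) * a r ^+ 2.
  by rewrite /gradc; ring.
by rewrite a_sqr mulr1 /act -ind_andb; ring.
Qed.

Lemma enorm_gradw_le r : (forall i, enorm (X i) = 1) ->
  enorm (gradw X y W a r) <= Num.sqrt n%:R / Num.sqrt m%:R * enorm (y - outp X W a).
Proof.
move=> X_unit.
rewrite -ler_sqr ?nnegrE ?enorm_ge0 //; last by rewrite !mulr_ge0 ?invr_ge0 ?sqrtr_ge0 ?enorm_ge0.
rewrite enorm_gradw_sqr exprMn -opprB enormN enorm_sqr expr_div_n !sqr_sqrtr ?ler0n //.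
rewrite mulrAC mulrC ler_wpM2r ?invr_ge0 ?ler0n //.
apply: le_trans (dotv_sum_unit_le _ X_unit) _.
by rewrite dotvv ler_wpM2l ?ler0n //; apply: ler_sum => i _; rewrite gradc_sqr_le.
Qed.
End Gradient.

Theorem mainTheorem7 (R : realType) (n d m : nat)
  (X : 'I_n -> 'rV[R]_d) (y : 'rV[R]_n) (W : 'I_m -> 'rV[R]_d) (a : 'I_m -> R)
  (lambda0 : R) :
  (0 < m)%N ->
  (forall i, enorm (X i) = 1) ->
  (forall r, a r = 1 \/ a r = -1) ->
  is_lambda_min (Hinf X) lambda0 ->
  0 < lambda0 ->
  (exists l, is_lambda_min (Hmat X W) l /\ lambda0 / 2 <= l) ->
  Num.sqrt lambda0 / Num.sqrt (2 * m%:R) * enorm (y - outp X W a)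
    <= \big[Num.max/0]_(r < m) enorm (gradw X y W a r)
  /\ \big[Num.max/0]_(r < m) enorm (gradw X y W a r)
    <= Num.sqrt (n%:R) / Num.sqrt (m%:R) * enorm (y - outp X W a).
Proof.
(* Only lambda_min(H) >= lambda0/2 matters; how lambda0 arises from H^infty does not. *)
move=> m_gt0 X_unit a_sign _ lambda0_gt0 [l [l_min le_l]].
set M := \big[Num.max/0]_r _.
have M_ge0 : 0 <= M by rewrite bigmax_ge_id.
split; last first.
  apply: bigmax_le => [|r _]; last exact: enorm_gradw_le.
  by rewrite !mulr_ge0 ?invr_ge0 ?sqrtr_ge0 ?enorm_ge0.
set e := outp X W a - y.
have le_mM : lambda0 / 2 * dotv e e <= m%:R * M ^+ 2.
  apply: le_trans (ler_wpM2r (dotv_ge0 e) le_l) _.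
  rewrite dotv_mulmx_tr; apply: le_trans (lambda_min_rayleigh _ (Hmat_sym X W) l_min) _.
  by rewrite -sum_enorm_gradw_sqr //; apply: sum_sqr_le_bigmax => r; exact: enorm_ge0.
rewrite -ler_sqr ?nnegrE ?mulr_ge0 ?invr_ge0 ?sqrtr_ge0 ?enorm_ge0 //.
rewrite -opprB enormN exprMn expr_div_n enorm_sqr -/e.
rewrite sqr_sqrtr ?(ltW lambda0_gt0) // sqr_sqrtr ?mulr_ge0 ?ler0n //.
have m_pos : 0 < m%:R :> R by rewrite ltr0n.
rewrite -(ler_pM2l m_pos) (_ : _ * (_ * _) = lambda0 / 2 * dotv e e) //.
by field; rewrite gt_eqF.
Qed.
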